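(* Let $\sigma$ be a reflection on a lattice $L$, regarded also as a reflection on the torus $T=\mathrm{T}(1)\otimes L=(\mathbb{R}\otimes L)/L$. Then sending $b\in L$ to the residue class of $b/2$ in $T$ gives a bijection between markings $\pm(b,\beta)$ of $\sigma$ (on $L$) and elements $h\in T$ which are markings of $\sigma$ (on $T$).
   Context: A lattice is a free abelian group of finite rank. A reflection on $L$ is an automorphism conjugate in $GL(r,\mathbb{Q})$ to $\mathrm{diag}(-1,1,\dots,1)$. A strict marking of $\sigma$ on $L$ is a pair $(b,\beta)$ with $b\in L$, $\beta:L\to\mathbb{Z}$ a homomorphism, and $\sigma(x)=x+\beta(x)b$ for all $x\in L$; a marking is an equivalence class $\pm(b,\beta)$ of strict markings up to sign. On $T$ (written additively), $\sigma$ is trivial mod $2$ if it fixes every $x\in T$ with $2x=0$, and a marking of $\sigma$ is an element $h\in T$ lying in the identity component of $\{x\in T:\sigma(x)=-x\}$ (equivalently $h\in\mathrm{T}(1)\otimes\ker(1+\sigma)$), with $2h=0$, and with $h\neq0$ if $\sigma$ is nontrivial mod $2$. *)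

From HB Require Import structures.
From mathcomp Require Import all_boot all_order all_algebra.
From mathcomp Require Import reals.
Set Implicit Arguments. Unset Strict Implicit. Unset Printing Implicit Defensive.
Import Order.TTheory GRing.Theory Num.Theory.
Local Open Scope ring_scope.

(* The lattice L is modelled as Z^r (column vectors 'cV[int]_r); an
   endomorphism of L is an integer matrix acting on the left. *)

Definition refl_diag (r : nat) : 'M[rat]_r :=
  diag_mx (\row_(i < r) (if val i == 0%N then -1 else 1)).

Definition reflection (r : nat) (M : 'M[int]_r) : Prop :=
  (0 < r)%N /\ M \in unitmx /\
  exists P : 'M[rat]_r, P \in unitmx /\
    map_mx (fun z : int => z%:~R) M = invmx P *m refl_diag r *m P.

Definition strict_marking (r : nat) (M : 'M[int]_r)
  (b : 'cV[int]_r) (beta : 'rV[int]_r) : Prop :=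
  forall x : 'cV[int]_r, M *m x = x + (beta *m x) ord0 ord0 *: b.

(* ---- The torus T = (R (x) L)/L = R^r / Z^r, elements represented by
   vectors of R^r, with equality modulo Z^r. ---- *)
Definition mxR (R : realType) (r : nat) (v : 'cV[int]_r) : 'cV[R]_r :=
  map_mx (fun z : int => z%:~R) v.

Definition in_lattice (R : realType) (r : nat) (x : 'cV[R]_r) : bool :=
  [forall i, x i ord0 \is a Num.int].

Definition teq (R : realType) (r : nat) (x y : 'cV[R]_r) : Prop :=
  in_lattice (x - y).

Definition tact (R : realType) (r : nat) (M : 'M[int]_r) (x : 'cV[R]_r)
  : 'cV[R]_r := map_mx (fun z : int => z%:~R) M *m x.

Definition trivial_mod2 (R : realType) (r : nat) (M : 'M[int]_r) : Prop :=
  forall x : 'cV[R]_r, in_lattice (2%:R *: x) -> teq (tact M x) x.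

Definition in_real_span_minus (R : realType) (r : nat) (M : 'M[int]_r)
  (x : 'cV[R]_r) : Prop :=
  exists (n : nat) (vs : 'I_n -> 'cV[int]_r) (ts : 'I_n -> R),
    (forall i, M *m vs i = - vs i) /\ x = \sum_(i < n) ts i *: mxR R (vs i).

Definition torus_marking (R : realType) (r : nat) (M : 'M[int]_r)
  (h : 'cV[R]_r) : Prop :=
  (exists x, in_real_span_minus M x /\ teq h x) /\
  in_lattice (2%:R *: h) /\
  (~ trivial_mod2 R M -> ~~ in_lattice h).

Definition half_class (R : realType) (r : nat) (b : 'cV[int]_r) : 'cV[R]_r :=
  (2%:R)^-1 *: mxR R b.

Arguments torus_marking R [r] M h.

(* A reflection sigma can be written sigma = 1 + b0 beta0 with b0 primitive:
   sigma - 1 has rank one over Q, so its Smith normal form has a single nonzero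
   entry.  As tr (sigma - 1) = -2, every strict marking (b, beta) has
   beta(b) = -2, and comparing b beta with b0 beta0 gives b = l b0 and
   beta0 = l beta with l a divisor of -2.  By primitivity of b0, b/2 and b'/2
   agree in T iff l = l' (mod 2), i.e. l' = +-l, which is injectivity.
   Conversely ker(1 + sigma) is contained in Q b0, so a marking h of sigma on T
   is congruent to 0 or to b0/2.  The class b0/2 comes from (b0, beta0); the
   class 0 forces sigma to be trivial mod 2, which makes beta0 even, and then
   (2 b0, beta0/2) is a marking. *)

From HB Require Import structures.
From mathcomp Require Import all_boot all_order all_algebra.
From mathcomp Require Import reals boolp ring zify.
Import Order.TTheory GRing.Theory Num.Theory.
Local Open Scope ring_scope.
Set Implicit Arguments. Unset Strict Implicit. Unset Printing Implicit Defensive.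

Lemma outer_prod_rcancel (R : idomainType) m n (u u' : 'cV[R]_m) (w : 'rV[R]_n) :
  w != 0 -> u *m w = u' *m w -> u = u'.
Proof.
case/rV0Pn=> j wj0 /matrixP E; apply/matrixP=> i k; rewrite (ord1 k).
by apply: (mulIf wj0); have := E i j; rewrite !mxE !big_ord1.
Qed.

Lemma outer_prod_lcancel (R : idomainType) m n (u : 'cV[R]_m) (w w' : 'rV[R]_n) :
  u != 0 -> u *m w = u *m w' -> w = w'.
Proof.
move=> u_nz E; apply: trmx_inj; apply: (@outer_prod_rcancel _ _ _ _ _ u^T).
  by rewrite trmx_eq0.
by rewrite -!trmx_mul E.
Qed.

Lemma diag_outer_prodE (R : idomainType) n (A : 'M[R]_n.+1)
    (u : 'cV[R]_n.+1) (w : 'rV[R]_n.+1) :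
  is_diag_mx A -> A = u *m w -> exists k, A = A k k *: delta_mx k k.
Proof.
move=> /is_diag_mxP Adiag EA.
have {}Adiag i j : i != j -> A i j = 0 by exact: Adiag.
have Aij i j : A i j = u i 0 * w 0 j by rewrite EA mxE big_ord1.
have [->|/matrix0Pn[k [j Akj]]] := eqVneq A 0; first by exists 0; rewrite mxE scale0r.
have [jk|kj] := eqVneq k j; last by case/eqP: Akj; exact: Adiag.
subst j; exists k; apply/matrixP=> i j; rewrite !mxE.
have [->|ik] := eqVneq i k.
  by have [->|jk] := eqVneq j k; rewrite ?mulr1 // mulr0 Adiag // eq_sym.
rewrite mulr0; have [<-|] := eqVneq i j; last exact: Adiag.
have wk : w 0 k != 0 by apply: contraNneq Akj; rewrite Aij => ->; rewrite mulr0.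
have ui : u i 0 = 0.
  by apply/eqP; have /eqP := Adiag i k ik; rewrite Aij mulf_eq0 (negbTE wk) orbF.
by rewrite Aij ui mul0r.
Qed.

Lemma mxOverD (V : zmodType) (S : addrClosed V) m n :
  {in mxOver S &, forall A B : 'M[V]_(m, n), A + B \is a mxOver S}.
Proof. by move=> A B /mxOverP SA /mxOverP SB; apply/mxOverP=> i j; rewrite mxE rpredD. Qed.

Lemma mxOverB (V : zmodType) (S : zmodClosed V) m n :
  {in mxOver S &, forall A B : 'M[V]_(m, n), A - B \is a mxOver S}.
Proof. by move=> A B /mxOverP SA /mxOverP SB; apply/mxOverP=> i j; rewrite !mxE rpredB. Qed.

Lemma map_intr_mx_inj (F : numDomainType) m n :
  injective (map_mx intr : 'M[int]_(m, n) -> 'M[F]_(m, n)).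
Proof.
by move=> A B /matrixP AB; apply/matrixP=> i j; have := AB i j; rewrite !mxE => /intr_inj.
Qed.

Definition primitive_col r (b : 'cV[int]_r) := exists phi : 'rV[int]_r, phi *m b = 1%:M.

Lemma primitive_col_outer_prod r (b0 b : 'cV[int]_r) (beta0 beta : 'rV[int]_r) :
  primitive_col b0 -> b0 *m beta0 = b *m beta -> beta != 0 ->
  exists l : int, b = l *: b0 /\ beta0 = l *: beta.
Proof.
case=> phi phib0 E beta_nz; set l := (phi *m b) 0 0; exists l.
have beta0E : beta0 = l *: beta.
  by rewrite -[beta0]mul1mx -phib0 -mulmxA E mulmxA [phi *m b]mx11_scalar mul_scalar_mx.
split=> //; apply: (outer_prod_rcancel beta_nz).
by rewrite -E beta0E -scalemxAr scalemxAl.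
Qed.

Lemma refl_diagE r : refl_diag r.+1 = 1%:M - 2%:R *: delta_mx 0 0.
Proof.
apply/matrixP=> -[[|i] Hi] [[|j] Hj]; rewrite !mxE /=.
- by rewrite mulr1n mulr1.
- by rewrite mulr0n mulr0 subr0.
- by rewrite mulr0n mulr0 subr0.
- by rewrite mulr0 subr0.
Qed.

Lemma reflection_sub1E r (M : 'M[int]_r.+1) : reflection M ->
  exists2 P : 'M[rat]_r.+1, P \in unitmx &
    map_mx intr (M - 1%:M) = invmx P *m (- 2%:R *: delta_mx 0 0) *m P.
Proof.
case=> _ [_ [P [Punit ME]]]; exists P => //.
rewrite map_mxD map_mxN map_mx1 ME.
have -> : 1%:M = invmx P *m 1%:M *m P by rewrite mulmx1 mulVmx.
by rewrite -mulmxBl -mulmxBr refl_diagE addrAC subrr add0r scaleNr.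
Qed.

Lemma reflection_trace r (M : 'M[int]_r.+1) : reflection M -> \tr (M - 1%:M) = -2.
Proof.
case/reflection_sub1E=> P Punit ME; apply: (@intr_inj rat).
rewrite -trace_map_mx ME mxtrace_mulC mulmxA mulmxV // mul1mx mxtraceZ.
by rewrite /mxtrace big_ord_recl big1 => [|i _]; rewrite !mxE //= mulr1 addr0.
Qed.

Lemma reflection_rank1 r (M : 'M[int]_r.+1) : reflection M ->
  exists (u : 'cV[rat]_r.+1) (w : 'rV[rat]_r.+1), map_mx intr (M - 1%:M) = u *m w.
Proof.
case/reflection_sub1E=> P _ ME.
exists (invmx P *m (- 2%:R *: delta_mx 0 0)), (delta_mx 0 0 *m P).
by rewrite ME -(mul_delta_mx (0 : 'I_1)) scalemxAl !mulmxA.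
Qed.

Lemma reflection_primitive_marking r (M : 'M[int]_r.+1) : reflection M ->
  exists b0 beta0, M = 1%:M + b0 *m beta0 /\ primitive_col b0.
Proof.
case/reflection_rank1=> u [w uw].
have [L Lunit [K Kunit [d _ SNF]]] := int_Smith_normal_form (M - 1%:M).
set D := \matrix_(i, j) _ in SNF.
have DE : D = invmx L *m (M - 1%:M) *m invmx K.
  by rewrite SNF !mulmxA mulVmx // mul1mx mulmxK.
have [k Dk] : exists k, D = D k k *: delta_mx k k.
  have /diag_outer_prodE : map_mx intr D
      = (map_mx intr (invmx L) *m u) *m (w *m map_mx intr (invmx K)).
    by rewrite DE !map_mxM uw !mulmxA.
  case=> [|k Dk]; first by apply/is_diag_mxP=> i j ij; rewrite !mxE (negbTE ij).
  exists k; apply: (@map_intr_mx_inj rat).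
  by rewrite map_mxZ map_delta_mx {1}Dk mxE.
exists (L *m delta_mx k 0), (D k k *: (delta_mx 0 k *m K)); split.
  set c := D k k in Dk *.
  rewrite -[M](subrK 1%:M) addrC SNF Dk -(mul_delta_mx (0 : 'I_1)).
  by rewrite -!scalemxAr -scalemxAl !mulmxA.
exists (delta_mx 0 k *m invmx L).
rewrite mulmxA -(mulmxA _ (invmx L)) mulVmx // mulmx1 mul_delta_mx.
by apply/matrixP=> i j; rewrite !ord1 !mxE.
Qed.

Lemma factor_neg2_bound (l m : int) : l * m = -2 -> -2 <= l <= 2.
Proof.
move=> lm; have m_nz : m != 0 by apply/eqP=> m0; move: lm; rewrite m0 mulr0.
by apply/andP; split; nia.
Qed.

Lemma factor_neg2_congr2 (l l' m m' q : int) :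
  l * m = -2 -> l' * m' = -2 -> l - l' = q * 2 -> l' = l \/ l' = - l.
Proof.
move=> lm lm' ll'; have /andP[? ?] := factor_neg2_bound lm.
have /andP[? ?] := factor_neg2_bound lm'.
have l_nz : l != 0 by apply/eqP=> l0; move: lm; rewrite l0 mul0r.
have l'_nz : l' != 0 by apply/eqP=> l'0; move: lm'; rewrite l'0 mul0r.
lia.
Qed.

Lemma int_even_or_odd (n : int) : exists q, n = q * 2 \/ n = q * 2 + 1.
Proof.
exists (n %/ 2)%Z; have := divz_eq n 2; have := modz_ge0 n (isT : 2 != 0 :> int).
have := ltz_pmod n (isT : 0 < 2 :> int); lia.
Qed.

Lemma strict_markingE r (M : 'M[int]_r) (b : 'cV[int]_r) (beta : 'rV[int]_r) :
  strict_marking M b beta <-> M = 1%:M + b *m beta.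
Proof.
have betaE x : (beta *m x) 0 0 *: b = b *m (beta *m x).
  by rewrite {2}[beta *m x]mx11_scalar mul_mx_scalar.
split=> [Mx|-> x]; last by rewrite betaE mulmxDl mul1mx mulmxA.
apply/matrixP=> i j; apply: (@col_eq _ _ _ _ j j).
by rewrite !colE Mx betaE mulmxDl mul1mx mulmxA.
Qed.

Lemma marking_pairing r (M : 'M[int]_r.+1) (b : 'cV[int]_r.+1) (beta : 'rV[int]_r.+1) :
  reflection M -> M = 1%:M + b *m beta -> (beta *m b) 0 0 = -2.
Proof.
move/reflection_trace=> trM ME; move: trM; rewrite ME addrAC subrr add0r mxtrace_mulC => <-.
by rewrite /mxtrace big_ord1.
Qed.

Lemma marking_opp_eigen r (M : 'M[int]_r) (b : 'cV[int]_r) (beta : 'rV[int]_r) :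
  M = 1%:M + b *m beta -> (beta *m b) 0 0 = -2 -> M *m b = - b.
Proof.
move=> -> betab; rewrite mulmxDl mul1mx -mulmxA [beta *m b]mx11_scalar betab.
by rewrite mul_mx_scalar -[X in X + _]scale1r -scalerDl scaleN1r.
Qed.

Lemma opp_eigen_double r (M : 'M[int]_r) (b v : 'cV[int]_r) (beta : 'rV[int]_r) :
  M = 1%:M + b *m beta -> M *m v = - v -> v *+ 2 = - ((beta *m v) 0 0 *: b).
Proof.
move=> ME Mv; have E : - v - v = (beta *m v) 0 0 *: b.
  rewrite -{1}Mv ME mulmxDl mul1mx addrAC subrr add0r -mulmxA.
  by rewrite {1}[beta *m v]mx11_scalar mul_mx_scalar.
by rewrite -E opprD !opprK mulr2n.
Qed.

Section Torus.
Variable R : realType.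

Lemma in_latticeE r (x : 'cV[R]_r) : in_lattice x = (x \is a mxOver Num.int).
Proof.
apply/forallP/mxOverP=> [xZ i j|xZ i]; first by rewrite (ord1 j).
exact: xZ.
Qed.

Lemma map_intr_mxOver m n (A : 'M[int]_(m, n)) :
  map_mx intr A \is a mxOver (Num.int : {pred R}).
Proof. by apply/mxOverP=> i j; rewrite mxE intr_int. Qed.

Lemma primitive_col_scale_int r (b : 'cV[int]_r) (t : R) :
  primitive_col b -> t *: mxR R b \is a mxOver Num.int -> t \is a Num.int.
Proof.
case=> phi phib tbZ.
have := mxOverM (map_intr_mxOver phi) tbZ; move/mxOverP/(_ 0 0).
by rewrite -scalemxAr -map_mxM phib map_mx1 !mxE mulr1.
Qed.

Let two_nz : 2%:R != 0 :> R. Proof. by rewrite pnatr_eq0. Qed.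

Lemma half_classK r (b : 'cV[int]_r) : 2%:R *: half_class R b = mxR R b.
Proof. by rewrite scalerA mulfV // scale1r. Qed.

Lemma teq_half_class_opp r (b : 'cV[int]_r) : teq (half_class R b) (half_class R (- b)).
Proof.
rewrite /teq in_latticeE /half_class /mxR map_mxN scalerN opprK -scalerDr -mulr2n.
by rewrite -scaler_nat scalerA mulVf // scale1r map_intr_mxOver.
Qed.

Lemma tact_marking r (M : 'M[int]_r) b beta (x : 'cV[R]_r) :
  M = 1%:M + b *m beta -> tact M x - x = mxR R b *m (map_mx intr beta *m x).
Proof.
by move=> ->; rewrite /tact map_mxD map_mx1 map_mxM mulmxDl mul1mx addrAC subrr add0r mulmxA.
Qed.

Lemma half_class_lattice_trivial_mod2 r (M : 'M[int]_r) b beta :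
  M = 1%:M + b *m beta -> in_lattice (half_class R b) -> trivial_mod2 R M.
Proof.
rewrite in_latticeE => ME bZ x; rewrite in_latticeE => x2Z.
rewrite /teq in_latticeE (tact_marking _ ME) -half_classK -scalemxAl !scalemxAr.
by rewrite !mxOverM ?map_intr_mxOver.
Qed.

Lemma torus_marking_half_class r (M : 'M[int]_r.+1) b beta :
  reflection M -> M = 1%:M + b *m beta -> torus_marking R M (half_class R b).
Proof.
move=> reflM ME; split; [|split].
- exists (half_class R b); split; last by rewrite /teq subrr in_latticeE mxOver0 ?rpred0.
  exists 1%N, (fun=> b), (fun=> 2%:R^-1); rewrite big_ord1; split=> // _.
  exact: marking_opp_eigen ME (marking_pairing reflM ME).
- by rewrite in_latticeE half_classK map_intr_mxOver.
- by move=> nontriv; apply/negP=> /(half_class_lattice_trivial_mod2 ME).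
Qed.

Lemma opp_eigen_mxR_multiple r (M : 'M[int]_r) b0 beta0 v :
  M = 1%:M + b0 *m beta0 -> M *m v = - v ->
  mxR R v = (- ((beta0 *m v) 0 0)%:~R / 2) *: mxR R b0.
Proof.
move=> ME Mv; apply: (scalerI two_nz); rewrite scalerA mulrCA mulfV // mulr1.
rewrite scaler_nat scaleNr -map_mxZ -map_mxN -(opp_eigen_double ME Mv).
by rewrite raddfMn.
Qed.

Lemma real_span_minus_multiple r (M : 'M[int]_r) b0 beta0 x :
  M = 1%:M + b0 *m beta0 -> in_real_span_minus M x ->
  exists t : R, x = t *: mxR R b0.
Proof.
move=> ME [n [vs [ts [Mvs ->]]]].
exists (\sum_i ts i * (- ((beta0 *m vs i) 0 0)%:~R / 2)); rewrite scaler_suml.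
by apply: eq_bigr=> i _; rewrite (opp_eigen_mxR_multiple ME (Mvs i)) scalerA.
Qed.

Lemma torus_marking_half_multiple r (M : 'M[int]_r) b0 beta0 h :
  M = 1%:M + b0 *m beta0 -> primitive_col b0 -> torus_marking R M h ->
  exists n : int, teq h ((n%:~R / 2) *: mxR R b0).
Proof.
move=> ME b0prim [[x [/(real_span_minus_multiple ME) [t ->] hx]] [h2 _]].
move: hx h2; rewrite /teq !in_latticeE => hx h2.
have : t * 2 \is a Num.int.
  apply: (primitive_col_scale_int b0prim).
  have -> : (t * 2) *: mxR R b0 = 2%:R *: h - 2%:R *: (h - t *: mxR R b0).
    by rewrite scalerBr opprB addrC subrK scalerA mulrC.
  by rewrite mxOverB // mxOverZ // natr_int.
by case/intrP=> n tn; exists n; rewrite -tn mulfK // in_latticeE.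
Qed.

Lemma trivial_mod2_even r (M : 'M[int]_r) b0 beta0 :
  M = 1%:M + b0 *m beta0 -> primitive_col b0 -> trivial_mod2 R M ->
  exists gamma, beta0 = 2 *: gamma.
Proof.
move=> ME b0prim triv.
have beta0_even (j : 'I_r) : (2 %| beta0 ord0 j)%Z.
  pose x := 2%:R^-1 *: mxR R (delta_mx j 0).
  have /triv : in_lattice (2%:R *: x).
    by rewrite in_latticeE scalerA mulfV // scale1r map_intr_mxOver.
  rewrite /teq in_latticeE (tact_marking _ ME) /x -scalemxAr -map_mxM -colE.
  rewrite [col j beta0]mx11_scalar mxE map_scalar_mx -scalemxAr mul_mx_scalar scalerA.
  move/(primitive_col_scale_int b0prim)/intrP=> [k kE]; apply/dvdzP; exists k.
  by apply: (@intr_inj R); rewrite intrM -kE mulrC mulVKf.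
exists (\row_j (beta0 ord0 j %/ 2)%Z); apply/matrixP=> i j.
by rewrite (ord1 i) !mxE mulrC divzK.
Qed.

Lemma torus_marking_lift r (M : 'M[int]_r) b0 beta0 h :
  M = 1%:M + b0 *m beta0 -> primitive_col b0 -> torus_marking R M h ->
  exists b beta, strict_marking M b beta /\ teq (half_class R b) h.
Proof.
move=> ME b0prim hmark; have [n] := torus_marking_half_multiple ME b0prim hmark.
have [_ [_ nontriv]] := hmark; rewrite /teq in_latticeE => hn.
have [q [nE|nE]] := int_even_or_odd n.
- have hZ : h \is a mxOver Num.int.
    move: hn; rewrite nE intrM mulfK // => hq.
    by rewrite -(subrK (q%:~R *: mxR R b0) h) mxOverD // mxOverZ ?intr_int ?map_intr_mxOver.
  have triv : trivial_mod2 R M by apply: contrapT=> /nontriv; rewrite in_latticeE hZ.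
  have [gamma beta0E] := trivial_mod2_even ME b0prim triv.
  exists (2 *: b0), gamma; split.
    by apply/strict_markingE; rewrite ME beta0E -scalemxAr scalemxAl.
  rewrite in_latticeE /half_class /mxR map_mxZ scalerA mulVf // scale1r.
  by rewrite mxOverB ?map_intr_mxOver.
- exists b0, beta0; split; first exact/strict_markingE.
  have -> : half_class R b0 - h = (- q)%:~R *: mxR R b0 - (h - (n%:~R / 2) *: mxR R b0).
    by apply/matrixP=> i j; rewrite /half_class /mxR !mxE nE intrN intrD intrM; field.
  by rewrite in_latticeE mxOverB // mxOverZ ?intr_int ?map_intr_mxOver.
Qed.

Lemma teq_half_class_marking_sign r (M : 'M[int]_r.+1) b0 beta0 b beta b' beta' :
  reflection M -> M = 1%:M + b0 *m beta0 -> primitive_col b0 ->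
  M = 1%:M + b *m beta -> M = 1%:M + b' *m beta' ->
  teq (half_class R b) (half_class R b') ->
  (b' = b /\ beta' = beta) \/ (b' = - b /\ beta' = - beta).
Proof.
move=> reflM ME0 b0prim ME ME'.
have multiple c gamma : M = 1%:M + c *m gamma ->
    exists l, c = l *: b0 /\ l * (gamma *m b0) 0 0 = -2.
  move=> MEc; have gamma_nz : gamma != 0.
    apply/eqP=> gamma0; have := marking_pairing reflM MEc.
    by rewrite gamma0 mul0mx mxE => /eqP.
  have E : b0 *m beta0 = c *m gamma by apply: (addrI 1%:M); rewrite -ME0.
  have [l [cE beta0E]] := primitive_col_outer_prod b0prim E gamma_nz.
  by exists l; split; last rewrite -(marking_pairing reflM ME0) beta0E -scalemxAl [in RHS]mxE.
have [l [bE lm]] := multiple _ _ ME; have [l' [b'E l'm]] := multiple _ _ ME'.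
rewrite /teq in_latticeE => hbb'.
have [q ll'] : exists q, l - l' = q * 2.
  have : ((l - l')%:~R / 2 : R) \is a Num.int.
    apply: (primitive_col_scale_int b0prim).
    suff -> : ((l - l')%:~R / 2) *: mxR R b0 = half_class R b - half_class R b' by [].
    rewrite /half_class /mxR bE b'E !map_mxZ !scalerA -scalerBl intrB.
    by congr (_ *: _); ring.
  by case/intrP=> q qE; exists q; apply: (@intr_inj R); rewrite intrM -qE divfK.
have b_nz : b != 0.
  by apply/eqP=> b0'; have := marking_pairing reflM ME; rewrite b0' mulmx0 mxE => /eqP.
have betaE : b *m beta = b' *m beta' by apply: (addrI 1%:M); rewrite -ME.
have [l'E|l'E] := factor_neg2_congr2 lm l'm ll'; [left|right].
  have b'b : b' = b by rewrite b'E bE l'E.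
  by split=> //; apply: (outer_prod_lcancel b_nz); apply/esym; rewrite betaE b'b.
have b'b : b' = - b by rewrite b'E bE l'E scaleNr.
split=> //; apply: (outer_prod_lcancel b_nz).
by apply/esym; rewrite mulmxN betaE b'b mulNmx opprK.
Qed.

End Torus.

Theorem lemma2p18 (R : realType) (r : nat) (M : 'M[int]_r) :
  reflection M ->
  (* the map is well defined on markings (b/2 and -b/2 agree in T) ... *)
  (forall b beta, strict_marking M b beta ->
     torus_marking R M (half_class R b) /\
     teq (half_class R b) (half_class R (- b))) /\
  (* ... injective on markings +-(b, beta) ... *)
  (forall b beta b' beta', strict_marking M b beta -> strict_marking M b' beta' ->
     teq (half_class R b) (half_class R b') ->
     (b' = b /\ beta' = beta) \/ (b' = - b /\ beta' = - beta)) /\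
  (* ... and surjective onto the markings of sigma on T. *)
  (forall h : 'cV[R]_r, torus_marking R M h ->
     exists b beta, strict_marking M b beta /\ teq (half_class R b) h).
Proof.
case: r M => [|r] M reflM; first by case: reflM.
have [b0 [beta0 [ME0 b0prim]]] := reflection_primitive_marking reflM.
split; [|split].
- move=> b beta /strict_markingE ME.
  by split; [exact: torus_marking_half_class reflM ME | exact: teq_half_class_opp].
- move=> b beta b' beta' /strict_markingE ME /strict_markingE ME'.
  exact: teq_half_class_marking_sign reflM ME0 b0prim ME ME'.
- by move=> h; apply: torus_marking_lift ME0 b0prim.
Qed.
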